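(* Let $\delta>0$ and let $U\in C^1(-1,-1+\delta)$ satisfy $(1-x^2)U'+2xU+\frac12U^2=P_c(x)$ on $(-1,-1+\delta)$ for some $c_1,c_2,c_3\in\mathbb{R}$. Then $c_1\ge-1$, the limit $U(-1):=\lim_{x\to-1^+}U(x)$ exists and is finite, and $U(-1)=\tau_1(c_1)$ or $U(-1)=\tau_2(c_1)$.
   Context: $P_c(x):=c_1(1-x)+c_2(1+x)+c_3(1-x^2)$ for $c=(c_1,c_2,c_3)$. $\tau_1(c_1):=2-2\sqrt{1+c_1}$, $\tau_2(c_1):=2+2\sqrt{1+c_1}$. *)

From Stdlib Require Import Reals.
From Coquelicot Require Import Coquelicot.
Open Scope R_scope.

Definition Pc (c1 c2 c3 x : R) : R :=
  c1 * (1 - x) + c2 * (1 + x) + c3 * (1 - x ^ 2).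

Definition tau1 (c1 : R) : R := 2 - 2 * sqrt (1 + c1).
Definition tau2 (c1 : R) : R := 2 + 2 * sqrt (1 + c1).

From Stdlib Require Import Reals Lra Psatz Classical.
From Coquelicot Require Import Coquelicot.
Open Scope R_scope.

(* Near x = -1 the equation reads (1 - x^2) U' = rhs(x, U), where rhs(x, u) tends to
   limit_rhs(u) = 2 c1 + 2 u - u^2/2 as x -> -1 and 1 - x^2 ~ 2 (x + 1).  So wherever
   rhs(x, U) stays >= m > 0 we get U' >= m / (2 (x + 1)), and U diverges logarithmically
   as x -> -1 (symmetrically for <= -m).  This yields three facts: U cannot escape to +-oo
   (apply the argument to 1/U); at a level v with limit_rhs(v) <> 0, U' has a fixed sign
   wherever U = v near -1, so U eventually stays on one side of v; and a finite limit L of U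
   must satisfy limit_rhs(L) = 0.  The first two force U to converge, to the supremum of the
   levels eventually below U, and the roots of limit_rhs are tau1 c1 and tau2 c1, which
   exist only when c1 >= -1. *)

Lemma filter_incompatible {T : Type} {F : (T -> Prop) -> Prop} {FF : ProperFilter F}
    (P Q : T -> Prop) :
  F P -> F Q -> (forall x, P x -> Q x -> False) -> False.
Proof.
  intros HP HQ HPQ.
  destruct (Hierarchy.filter_ex _ (filter_and _ _ HP HQ)) as [x [Px Qx]].
  exact (HPQ x Px Qx).
Qed.

Lemma at_right_interval (a : R) (P : R -> Prop) :
  at_right a P <-> exists e, 0 < e /\ forall x, a < x < a + e -> P x.
Proof.
  split.
  - intros [eps Heps]. exists eps. split; [apply cond_pos|].
    intros x Hx. apply Heps; [|lra].
    change (Rabs (x - a) < eps). apply Rabs_def1; lra.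
  - intros [e [He HP]]. exists (mkposreal e He). intros x Hx Hax.
    change (Rabs (x - a) < e) in Hx. apply Rabs_def2 in Hx. apply HP. lra.
Qed.

Lemma at_left_gt (a b : R) : b < a -> at_left a (fun x => b < x < a).
Proof.
  intros Hba. unfold at_left, within. generalize (open_gt b a Hba). apply filter_imp.
  intros x Hbx Hxa. split; assumption.
Qed.

Lemma filterlim_at_right_id (a : R) : filterlim (fun x => x) (at_right a) (locally a).
Proof. intros P HP. exact (filter_le_within _ _ HP). Qed.

Lemma is_derive_neg_local (g : R -> R) (t l : R) :
  is_derive g t l -> l < 0 ->
  at_left t (fun y => g t < g y) /\ at_right t (fun y => g y < g t).
Proof.
  intros Hd Hl. apply is_derive_Reals in Hd.
  destruct (Hd (- l) ltac:(lra)) as [d Hq].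
  assert (Hloc : forall y : R, Rabs (y - t) < d -> y <> t -> (g y - g t) * (y - t) < 0).
  { intros y Hy Hyt. specialize (Hq (y - t) ltac:(lra) Hy).
    replace (t + (y - t)) with y in Hq by ring. apply Rabs_def2 in Hq.
    replace ((g y - g t) * (y - t)) with ((g y - g t) / (y - t) * (y - t) ^ 2)
      by (field; lra).
    assert (0 < (y - t) ^ 2) by (apply pow2_gt_0; lra). nra. }
  split; exists d; intros y Hy Hty; specialize (Hloc y Hy ltac:(lra)); nra.
Qed.

Lemma stays_below_level (g : R -> R) (v a b : R) :
  (forall t, a <= t <= b -> g t <= v -> at_right t (fun y => g y < v)) ->
  (forall t, a <= t <= b -> v <= g t -> at_left t (fun y => v < g y)) ->
  a < b -> g a <= v -> g b < v.
Proof.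
  intros Hright Hleft Hab Ha.
  apply Rnot_le_lt. intros Hb.
  set (S := fun s => a < s <= b /\ v <= g s).
  set (LB := fun y => forall s, S s -> y <= s).
  (* [c] is the infimum of [S]: the first point after [a] where [g] reaches [v]. *)
  destruct (completeness LB) as [c [Hub Hlub]].
  { exists b. intros y Hy. apply Hy. split; [lra|exact Hb]. }
  { exists a. intros s [Hs _]. lra. }
  assert (Hlow : forall s, S s -> c <= s).
  { intros s Hs. apply Hlub. intros y Hy. exact (Hy s Hs). }
  assert (Hac : a <= c) by (apply Hub; intros s [Hs _]; lra).
  assert (Hcb : c <= b) by (apply Hlow; split; [lra|exact Hb]).
  assert (Hpush : forall t, a <= t <= b -> (forall s, S s -> t < s) -> g t <= v -> t < c).
  { intros t Ht HtS Hgt.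
    destruct (proj1 (at_right_interval _ _) (Hright t Ht Hgt)) as [e [He Hlt]].
    apply Rlt_le_trans with (t + e); [lra|].
    apply Hub. intros s Hs. apply Rnot_lt_le. intros Hse.
    specialize (HtS s Hs). destruct Hs as [_ Hs]. specialize (Hlt s ltac:(lra)). lra. }
  destruct (Rlt_or_le (g c) v) as [Hc|Hc].
  - assert (c < c); [|lra].
    apply Hpush; [lra| |lra].
    intros s Hs. destruct (Rle_lt_or_eq_dec c s (Hlow s Hs)) as [|<-]; [lra|].
    destruct Hs. lra.
  - assert (Hac' : a < c) by (apply Hpush; [lra| |exact Ha]; intros s [Hs _]; lra).
    apply (filter_incompatible _ _ (at_left_gt c a Hac') (Hleft c ltac:(lra) Hc)).
    intros y Hy Hgy. assert (Hgy' : g y < v); [|lra].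
    apply Rnot_le_lt. intros Hvy. assert (c <= y); [|lra].
    apply Hlow. split; [lra|exact Hvy].
Qed.

Lemma is_derive_level_local (g : R -> R) (t l v : R) :
  is_derive g t l -> (g t = v -> l < 0) ->
  (g t <= v -> at_right t (fun y => g y < v)) /\
  (v <= g t -> at_left t (fun y => v < g y)).
Proof.
  intros Hd Hsign.
  assert (Hcont : continuous g t).
  { apply (ex_derive_continuous (V := R_NormedModule)). exists l. exact Hd. }
  destruct (Rtotal_order (g t) v) as [Hlt|[Heq|Hgt]].
  - split; [|lra]. intros _.
    apply filter_le_within. exact (Hcont _ (open_lt v (g t) Hlt)).
  - destruct (is_derive_neg_local g t l Hd (Hsign Heq)) as [Hleft Hright].
    split; intros _; [generalize Hright | generalize Hleft];
      apply filter_imp; intros y Hy; lra.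
  - split; [lra|]. intros _.
    apply filter_le_within. exact (Hcont _ (open_gt v (g t) Hgt)).
Qed.

Lemma eventually_one_side_of_level (g g' : R -> R) (a v : R) :
  at_right a (fun x => is_derive g x (g' x) /\ (g x = v -> g' x < 0)) ->
  at_right a (fun x => g x < v) \/ at_right a (fun x => v < g x).
Proof.
  intros Hev. destruct (proj1 (at_right_interval _ _) Hev) as [e [He Hg]].
  destruct (classic (exists b, a < b < a + e /\ v <= g b)) as [[b [Hb Hgb]]|Hnone].
  - right. apply at_right_interval. exists (b - a). split; [lra|].
    intros x Hx. apply Rnot_le_lt. intros Hgx.
    assert (g b < v); [|lra].
    apply (stays_below_level g v x b); try lra;
      intros t Ht; destruct (Hg t ltac:(lra)) as [Hd Hs];
      apply (is_derive_level_local g t (g' t) v Hd Hs).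
  - left. apply at_right_interval. exists e. split; [exact He|].
    intros x Hx. apply Rnot_le_lt. intros Hvx. apply Hnone. exists x. split; assumption.
Qed.

Lemma derive_ge_inv_diverges (g g' : R -> R) (a m : R) : 0 < m ->
  at_right a (fun x => is_derive g x (g' x) /\ m <= (x - a) * g' x) ->
  filterlim g (at_right a) (Rbar_locally m_infty).
Proof.
  intros Hm Hev. destruct (proj1 (at_right_interval _ _) Hev) as [e [He Hg]].
  set (phi := fun x => g x - m / 2 * ln (x - a)).
  assert (Hphi : forall x y, a < x -> x < y -> y < a + e -> phi x < phi y).
  { intros x y Hx Hxy Hy.
    apply (incr_function phi a (a + e) (fun z => g' z - m / 2 * / (z - a)));
      simpl; try lra.
    - intros z Hz1 Hz2. apply (is_derive_minus (V := R_NormedModule)).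
      + apply Hg; lra.
      + apply (is_derive_scal (fun z => ln (z - a))). auto_derive; [lra| field; lra].
    - intros z Hz1 Hz2. destruct (Hg z ltac:(lra)) as [_ Hgz].
      assert (m / 2 * / (z - a) < g' z); [|lra].
      apply Rmult_lt_reg_l with (z - a); [lra|].
      field_simplify; lra. }
  set (b := a + e / 2).
  intros P [M HM]. apply at_right_interval.
  exists (Rmin (e / 2) (exp (2 / m * (M - phi b)))). split.
  { apply Rmin_pos; [lra| apply exp_pos]. }
  intros x Hx. apply HM.
  assert (Hxb : x - a < e / 2).
  { pose proof (Rmin_l (e / 2) (exp (2 / m * (M - phi b)))). lra. }
  assert (Hln : ln (x - a) < 2 / m * (M - phi b)).
  { rewrite <- (ln_exp (2 / m * (M - phi b))). apply ln_increasing; [lra|].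
    pose proof (Rmin_r (e / 2) (exp (2 / m * (M - phi b)))). lra. }
  specialize (Hphi x b ltac:(lra) ltac:(unfold b; lra) ltac:(unfold b; lra)).
  unfold phi at 1 in Hphi.
  assert (m / 2 * ln (x - a) < M - phi b).
  { apply Rmult_lt_compat_l with (r := m / 2) in Hln; [|lra].
    replace (m / 2 * (2 / m * (M - phi b))) with (M - phi b) in Hln by (field; lra). exact Hln. }
  lra.
Qed.

Lemma derive_ge_inv_unbounded_below (g g' : R -> R) (a m B : R) : 0 < m ->
  at_right a (fun x => is_derive g x (g' x) /\ m <= (x - a) * g' x) ->
  ~ at_right a (fun x => B <= g x).
Proof.
  intros Hm Hev Hbnd.
  assert (Hbelow : at_right a (fun x => g x < B)).
  { apply (derive_ge_inv_diverges g g' a m Hm Hev (fun y => y < B)).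
    exists B. intros y Hy. exact Hy. }
  apply (filter_incompatible _ _ Hbnd Hbelow). intros x Hx Hx'. lra.
Qed.

Lemma filterlim_of_one_sided {T : Type} (F : (T -> Prop) -> Prop) {FF : ProperFilter F}
    (u : T -> R) (D : R -> Prop) (lo hi : R) :
  (forall a b, a < b -> exists v, a < v < b /\ D v) ->
  (forall v, D v -> F (fun x => u x < v) \/ F (fun x => v < u x)) ->
  F (fun x => lo < u x < hi) ->
  exists L, filterlim u F (locally L).
Proof.
  intros Hdense Hside Hbnd.
  set (B := fun v => F (fun x => v < u x)).
  assert (HBhi : forall v, B v -> v <= hi).
  { intros v Hv. apply Rnot_lt_le. intros Hhi.
    apply (filter_incompatible _ _ Hv Hbnd). intros x Hx Hx'. lra. }
  destruct (completeness B) as [L [Hub Hlub]].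
  { exists hi. exact HBhi. }
  { exists lo. exact (filter_imp _ _ (fun x Hx => proj1 Hx) Hbnd). }
  exists L. apply filterlim_locally. intros eps.
  assert (Hlower : F (fun x => L - eps < u x)).
  { destruct (classic (exists b, B b /\ L - eps < b)) as [[b [Hb Hbe]]|Hnone].
    - revert Hb. unfold B. apply filter_imp. intros x Hx. lra.
    - assert (L <= L - eps); [|pose proof (cond_pos eps); lra].
      apply Hlub. intros b Hb. apply Rnot_lt_le. intros Hbe.
      apply Hnone. exists b. split; assumption. }
  assert (Hupper : F (fun x => u x < L + eps)).
  { destruct (Hdense L (L + eps)) as [v [Hv HDv]]; [pose proof (cond_pos eps); lra|].
    destruct (Hside v HDv) as [Hlt|Hgt].
    - generalize Hlt. apply filter_imp. intros x Hx. lra.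
    - assert (v <= L) by (apply Hub; exact Hgt). lra. }
  generalize (filter_and _ _ Hlower Hupper). apply filter_imp. intros x Hx.
  change (Rabs (u x - L) < eps). apply Rabs_def1; lra.
Qed.

Definition rhs (c1 c2 c3 x u : R) : R := Pc c1 c2 c3 x - 2 * x * u - / 2 * u ^ 2.

Definition limit_rhs (c1 u : R) : R := 2 * c1 + 2 * u - / 2 * u ^ 2.

Lemma rhs_m1 (c1 c2 c3 u : R) : rhs c1 c2 c3 (-1) u = limit_rhs c1 u.
Proof. unfold rhs, limit_rhs, Pc. ring. Qed.

Lemma limit_rhs_root (c1 L : R) :
  limit_rhs c1 L = 0 -> -1 <= c1 /\ (L = tau1 c1 \/ L = tau2 c1).
Proof.
  unfold limit_rhs, tau1, tau2. intros HL.
  assert (Hc1 : -1 <= c1) by (pose proof (pow2_ge_0 (L - 2)); nra).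
  split; [exact Hc1|].
  set (s := sqrt (1 + c1)).
  assert (Hs : s * s = 1 + c1) by (apply sqrt_sqrt; lra).
  assert (Hprod : (L - (2 - 2 * s)) * (L - (2 + 2 * s)) = 0) by nra.
  destruct (Rmult_integral _ _ Hprod); [left|right]; lra.
Qed.

Lemma limit_rhs_nonroot_between (c1 a b : R) :
  a < b -> exists v, a < v < b /\ limit_rhs c1 v <> 0.
Proof.
  intros Hab. apply NNPP. intros Hnone.
  assert (Hroot : forall v, a < v < b -> limit_rhs c1 v = 0).
  { intros v Hv. apply NNPP. intros Hv0. apply Hnone. exists v. split; assumption. }
  (* Two distinct roots of [limit_rhs c1] add up to 4. *)
  pose proof (Hroot ((3 * a + b) / 4) ltac:(lra)) as H1.
  pose proof (Hroot ((a + b) / 2) ltac:(lra)) as H2.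
  pose proof (Hroot ((a + 3 * b) / 4) ltac:(lra)) as H3.
  unfold limit_rhs in *. nra.
Qed.

Lemma filterlim_rhs {T : Type} {F : (T -> Prop) -> Prop} {FF : Filter F}
    (c1 c2 c3 : R) (X Y : T -> R) (x0 y0 : R) :
  filterlim X F (locally x0) -> filterlim Y F (locally y0) ->
  filterlim (fun t => rhs c1 c2 c3 (X t) (Y t)) F (locally (rhs c1 c2 c3 x0 y0)).
Proof.
  intros HX HY.
  apply (filterlim_comp _ _ _ (fun t => (X t, Y t)) (fun z => rhs c1 c2 c3 (fst z) (snd z))
           F (locally (x0, y0))).
  - intros P [eps HP]. apply (filterlim_pair X Y HX HY).
    apply (Filter_prod _ _ _ (ball x0 eps) (ball y0 eps)); try (exists eps; auto).
    intros x y Hx Hy. apply HP. split; assumption.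
  - apply continuity_2d_pt_filterlim. unfold rhs, Pc. simpl.
    repeat first [ apply continuity_2d_pt_minus | apply continuity_2d_pt_plus
                 | apply continuity_2d_pt_mult | apply continuity_2d_pt_const
                 | apply continuity_2d_pt_id1 | apply continuity_2d_pt_id2 ].
Qed.

Definition large_level (c1 c2 c3 : R) : R := 8 * (1 + Rabs c1 + Rabs c2 + Rabs c3).

Lemma large_level_pos (c1 c2 c3 : R) : 0 < large_level c1 c2 c3.
Proof.
  unfold large_level.
  pose proof (Rabs_pos c1). pose proof (Rabs_pos c2). pose proof (Rabs_pos c3). lra.
Qed.

Lemma rhs_le_neg_sq (c1 c2 c3 x u : R) :
  -1 < x < -1/2 -> large_level c1 c2 c3 <= Rabs u ->
  rhs c1 c2 c3 x u <= - (u ^ 2 / 8).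
Proof.
  intros Hx Hu. unfold large_level in Hu. unfold rhs, Pc.
  assert (Habs : forall c t T, 0 <= t <= T -> c * t <= Rabs c * T).
  { intros c t T Ht. pose proof (Rle_abs c). pose proof (Rabs_pos c).
    assert (c * t <= Rabs c * t) by (apply Rmult_le_compat_r; lra). nra. }
  pose proof (Habs c1 (1 - x) 2 ltac:(lra)).
  pose proof (Habs c2 (1 + x) 1 ltac:(lra)).
  pose proof (Habs c3 (1 - x ^ 2) 1 ltac:(nra)).
  pose proof (Habs u (- 2 * x) 2 ltac:(lra)).
  assert (Hsq : u ^ 2 = Rabs u * Rabs u).
  { rewrite <- Rabs_mult, Rabs_right; [ring| nra]. }
  pose proof (Rabs_pos c1). pose proof (Rabs_pos c2). pose proof (Rabs_pos c3).
  nra.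
Qed.

Lemma ode_rate_lower (x d r : R) :
  -1 < x < 1 -> (1 - x ^ 2) * d = r -> 0 <= r -> r <= 2 * (x + 1) * d.
Proof. intros Hx Hode Hr. nra. Qed.

Lemma ode_rate_upper (x d r : R) :
  -1 < x < 1 -> (1 - x ^ 2) * d = r -> r <= 0 -> 2 * (x + 1) * d <= r.
Proof. intros Hx Hode Hr. nra. Qed.

Section RiccatiNearMinusOne.

Variables (delta c1 c2 c3 : R) (U U' : R -> R).
Hypothesis delta_pos : 0 < delta.
Hypothesis U_derive : forall x, -1 < x < -1 + delta -> is_derive U x (U' x).
Hypothesis U_ode : forall x, -1 < x < -1 + delta ->
  (1 - x ^ 2) * U' x + 2 * x * U x + / 2 * (U x) ^ 2 = Pc c1 c2 c3 x.

Lemma ode_near_m1 :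
  at_right (-1) (fun x => -1 < x < -1/2 /\ is_derive U x (U' x) /\
                          (1 - x ^ 2) * U' x = rhs c1 c2 c3 x (U x)).
Proof.
  apply at_right_interval. exists (Rmin delta (1/2)). split; [apply Rmin_pos; lra|].
  intros x Hx. pose proof (Rmin_l delta (1/2)). pose proof (Rmin_r delta (1/2)).
  split; [lra|]. split; [apply U_derive; lra|].
  pose proof (U_ode x ltac:(lra)). unfold rhs. lra.
Qed.

Lemma U_not_large : ~ at_right (-1) (fun x => large_level c1 c2 c3 <= Rabs (U x)).
Proof.
  pose proof (large_level_pos c1 c2 c3) as HW.
  set (W := large_level c1 c2 c3) in *. intros Hlarge.
  (* [1 / U] would then tend to [-oo] at [-1], although it stays in [[-1/W, 1/W]]. *)
  apply (derive_ge_inv_unbounded_below (fun x => / U x) (fun x => - U' x / U x ^ 2)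
           (-1) (1/16) (- / W)); [lra| |].
  - generalize (filter_and _ _ ode_near_m1 Hlarge). apply filter_imp.
    intros x [[Hx [Hd Hode]] Hbig].
    assert (HUnz : U x <> 0) by (intros HU; rewrite HU, Rabs_R0 in Hbig; lra).
    assert (HU0 : 0 < U x ^ 2) by (apply pow2_gt_0; exact HUnz).
    split; [apply is_derive_inv; assumption|].
    pose proof (rhs_le_neg_sq c1 c2 c3 x (U x) Hx Hbig) as Hneg.
    pose proof (ode_rate_upper x (U' x) _ ltac:(lra) Hode) as Hrate.
    specialize (Hrate ltac:(lra)).
    replace ((x - -1) * (- U' x / U x ^ 2)) with ((x + 1) * (- U' x) / U x ^ 2)
      by (field; exact HUnz).
    apply (Rle_div_r (1/16) ((x + 1) * (- U' x)) (U x ^ 2) HU0). lra.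
  - generalize Hlarge. apply filter_imp. intros x Hbig.
    assert (Hinv : Rabs (/ U x) <= / W).
    { assert (HU : U x <> 0) by (intros HU; rewrite HU, Rabs_R0 in Hbig; lra).
      rewrite Rabs_inv. apply Rinv_le_contravar; lra. }
    pose proof (Rle_abs (- / U x)). rewrite Rabs_Ropp in *. lra.
Qed.

Lemma U_one_side (v : R) : limit_rhs c1 v <> 0 ->
  at_right (-1) (fun x => U x < v) \/ at_right (-1) (fun x => v < U x).
Proof.
  intros Hv.
  assert (Hlim : filterlim (fun x => rhs c1 c2 c3 x v) (at_right (-1))
                           (locally (limit_rhs c1 v))).
  { rewrite <- (rhs_m1 c1 c2 c3).
    apply filterlim_rhs; [apply filterlim_at_right_id| apply filterlim_const]. }
  destruct (Rdichotomy _ _ Hv) as [Hneg|Hpos].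
  - apply (eventually_one_side_of_level U U').
    generalize (filter_and _ _ ode_near_m1 (Hlim _ (open_lt 0 _ Hneg))). apply filter_imp.
    intros x [[Hx [Hd Hode]] Hr]. split; [exact Hd|].
    intros HUv. rewrite HUv in Hode. assert (0 < 1 - x ^ 2) by nra. nra.
  - destruct (eventually_one_side_of_level (fun x => - U x) (fun x => - U' x) (-1) (- v))
      as [Hlt|Hgt]; [| right | left].
    + generalize (filter_and _ _ ode_near_m1 (Hlim _ (open_gt 0 _ Hpos))). apply filter_imp.
      intros x [[Hx [Hd Hode]] Hr]. split; [exact (is_derive_opp U x (U' x) Hd)|].
      intros HUv. assert (U x = v) by lra. subst v. assert (0 < 1 - x ^ 2) by nra. nra.
    + generalize Hlt. apply filter_imp. intros x Hx. lra.
    + generalize Hgt. apply filter_imp. intros x Hx. lra.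
Qed.

Lemma U_bounded : exists lo hi, at_right (-1) (fun x => lo < U x < hi).
Proof.
  pose proof (large_level_pos c1 c2 c3) as HW.
  set (W := large_level c1 c2 c3) in *.
  destruct (limit_rhs_nonroot_between c1 (- W - 1) (- W) ltac:(lra)) as [lo [Hlo Hrlo]].
  destruct (limit_rhs_nonroot_between c1 W (W + 1) ltac:(lra)) as [hi [Hhi Hrhi]].
  exists lo, hi. apply filter_and.
  - destruct (U_one_side lo Hrlo) as [Hlt|Hgt]; [exfalso|exact Hgt].
    apply U_not_large. generalize Hlt. apply filter_imp. intros x Hx.
    unfold W in *. rewrite (Rabs_left (U x)); lra.
  - destruct (U_one_side hi Hrhi) as [Hlt|Hgt]; [exact Hlt|exfalso].
    apply U_not_large. generalize Hgt. apply filter_imp. intros x Hx.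
    unfold W in *. rewrite (Rabs_right (U x)); lra.
Qed.

Lemma U_limit_is_root (L : R) :
  filterlim U (at_right (-1)) (locally L) -> limit_rhs c1 L = 0.
Proof.
  intros HL.
  assert (Hlim : filterlim (fun x => rhs c1 c2 c3 x (U x)) (at_right (-1))
                           (locally (limit_rhs c1 L))).
  { rewrite <- (rhs_m1 c1 c2 c3). apply filterlim_rhs; [apply filterlim_at_right_id| exact HL]. }
  assert (Hnear : at_right (-1) (fun x => L - 1 < U x < L + 1)).
  { apply (HL (fun y => L - 1 < y < L + 1)). exists (mkposreal 1 Rlt_0_1). intros y Hy.
    change (Rabs (y - L) < 1) in Hy. apply Rabs_def2 in Hy. lra. }
  destruct (Rtotal_order (limit_rhs c1 L) 0) as [Hneg|[Hzero|Hpos]];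
    [exfalso|exact Hzero|exfalso].
  - apply (derive_ge_inv_unbounded_below (fun x => - U x) (fun x => - U' x) (-1)
             (- limit_rhs c1 L / 4) (- L - 1)); [lra| |].
    + generalize (filter_and _ _ ode_near_m1
                    (Hlim _ (open_lt (limit_rhs c1 L / 2) (limit_rhs c1 L) ltac:(lra)))).
      apply filter_imp. intros x [[Hx [Hd Hode]] Hr].
      split; [exact (is_derive_opp U x (U' x) Hd)|].
      pose proof (ode_rate_upper x (U' x) _ ltac:(lra) Hode ltac:(lra)). lra.
    + generalize Hnear. apply filter_imp. intros x Hx. lra.
  - apply (derive_ge_inv_unbounded_below U U' (-1) (limit_rhs c1 L / 4) (L - 1)); [lra| |].
    + generalize (filter_and _ _ ode_near_m1
                    (Hlim _ (open_gt (limit_rhs c1 L / 2) (limit_rhs c1 L) ltac:(lra)))).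
      apply filter_imp. intros x [[Hx [Hd Hode]] Hr]. split; [exact Hd|].
      pose proof (ode_rate_lower x (U' x) _ ltac:(lra) Hode ltac:(lra)). lra.
    + generalize Hnear. apply filter_imp. intros x Hx. lra.
Qed.

End RiccatiNearMinusOne.

Theorem lemma2p1 (delta c1 c2 c3 : R) (U U' : R -> R) :
  0 < delta ->
  (* U is C^1 on (-1, -1+delta) with derivative U' *)
  (forall x, -1 < x < -1 + delta -> is_derive U x (U' x)) ->
  (forall x, -1 < x < -1 + delta -> continuous U' x) ->
  (* the ODE on (-1, -1+delta) *)
  (forall x, -1 < x < -1 + delta ->
     (1 - x ^ 2) * U' x + 2 * x * U x + / 2 * (U x) ^ 2 = Pc c1 c2 c3 x) ->
  -1 <= c1 /\
  exists L : R,
    filterlim U (at_right (-1)) (locally L) /\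
    (L = tau1 c1 \/ L = tau2 c1).
Proof.
  (* Only the pointwise derivative of [U] enters. *)
  intros Hdelta HU _ Hode.
  destruct (U_bounded delta c1 c2 c3 U U' Hdelta HU Hode) as [lo [hi Hbnd]].
  destruct (filterlim_of_one_sided (at_right (-1)) U (fun v => limit_rhs c1 v <> 0) lo hi
              (limit_rhs_nonroot_between c1) (U_one_side delta c1 c2 c3 U U' Hdelta HU Hode) Hbnd)
    as [L HL].
  destruct (limit_rhs_root c1 L (U_limit_is_root delta c1 c2 c3 U U' Hdelta HU Hode L HL))
    as [Hc1 HLroot].
  split; [exact Hc1|]. exists L. split; assumption.
Qed.
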